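(* Let $\mathcal{I}$ be a hyperspectral image whose pixel-centred cuboids $B$ (each labelled by the class $y\in\mathcal{Y}=\{1,\dots,K\}$ of its central pixel) are partitioned into a training set $\mathcal{D}_{\text{train}}$ and the remaining cuboids, with the remaining cuboids randomly split into a calibration set $\{(B_i,y_i)\}_{i=1}^n$ and a test set. Let $S$ be a non-conformity score function derived from an HSI classifier trained on $\mathcal{D}_{\text{train}}$, such that for every cuboid $B$ and label $y$, $S(B,y)$ is invariant under any permutation of the union of the calibration and test sets. Fix $\lambda\in[0,1]$ and define the Score Aggregation Operator recursively by $\mathcal{V}_0=S$ and, for $k\ge1$, $$\mathcal{V}_k(B_i,y)=(1-\lambda)\mathcal{V}_{k-1}(B_i,y)+\frac{\lambda}{|\mathcal{N}_i|}\sum_{B_j\in\mathcal{N}_i}\mathcal{V}_{k-1}(B_j,y),$$ where $\mathcal{N}_i$ is the set of neighbouring cuboids around the central pixel of $B_i$ that are not in $\mathcal{D}_{\text{train}}$. Fix an integer $k\ge0$, let $(B_{n+1},y_{n+1})$ be a sample from the test set, set $\hat s_i:=\mathcal{V}_k(B_i,y_i)$ for $i=1,\dots,n$, and for $\alpha\in(0,1)$ let $$\hat\tau=\inf\Big\{s\ \Big|\ \frac{|\{i:\hat s_i\le s\}|}{n}\ge\frac{\lceil (n+1)(1-\alpha)\rceil}{n}\Big\},\qquad \hat{\mathcal{C}}_{1-\alpha}(B_{n+1};\hat\tau):=\{y\in\mathcal{Y}\mid \mathcal{V}_k(B_{n+1},y)\le\hat\tau\}.$$ Then $$\mathbb{P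}\big(y_{n+1}\in\hat{\mathcal{C}}_{1-\alpha}(B_{n+1};\hat\tau)\big)\ge1-\alpha.$$
   Context: A cuboid $B\in\mathbb{R}^{P\times P\times U}$ is the $P\times P$ spatial patch of the image (with all $U$ spectral bands) centred at a pixel. A non-conformity score function $S(B,y)$ assigns a real number measuring how poorly label $y$ conforms to the classifier's prediction at $B$. The infimum of the empty set is $+\infty$. *)

From HB Require Import structures.
From mathcomp Require Import all_boot all_order all_algebra all_fingroup.
From mathcomp Require Import boolp classical_sets reals constructive_ereal ereal.
Set Implicit Arguments. Unset Strict Implicit. Unset Printing Implicit Defensive.
Import Order.TTheory GRing.Theory Num.Theory.
Local Open Scope ring_scope.

(* A P x P x U cuboid of reals (spatial patch with all spectral bands). *)
Definition cuboid (R : Type) (P U : nat) := {ffun 'I_P * 'I_P * 'I_U -> R}.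

(* The non-training cuboids are indexed by 'I_M; N i is the set of
   (non-training) neighbours of cuboid i. *)
Fixpoint SAO (R : numFieldType) (M K : nat) (lam : R) (N : 'I_M -> {set 'I_M})
  (V0 : 'I_M -> 'I_K -> R) (k : nat) : 'I_M -> 'I_K -> R :=
  match k with
  | 0 => V0
  | k'.+1 => fun i y =>
      (1 - lam) * SAO lam N V0 k' i y
      + lam / #|N i|%:R * \sum_(j in N i) SAO lam N V0 k' j y
  end.

(* Random split encoded by a uniformly random permutation sigma of the
   non-training cuboids: calibration points are sigma(0..n-1), the test
   sample is sigma(n) (uniform among the test set given the split). *)
Definition cal (M n : nat) (h : (n < M)%N) (s : {perm 'I_M}) (i : 'I_n) : 'I_M :=
  s (widen_ord (ltnW h) i).
Definition test (M n : nat) (h : (n < M)%N) (s : {perm 'I_M}) : 'I_M :=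
  s (Ordinal h).

(* tau-hat = inf { s | |{i : s_i <= s}|/n >= ceil((n+1)(1-alpha))/n },
   an extended real (inf of the empty set is +oo). *)
Definition conf_threshold (R : realType) (n : nat) (sc : 'I_n -> R) (alpha : R)
  : \bar R :=
  ereal_inf [set x%:E | x in
    [set x : R | ((Num.ceil ((n.+1)%:R * (1 - alpha)))%:~R / n%:R : R)
                 <= #|[pred i : 'I_n | sc i <= x]|%:R / n%:R]]%classic.

Definition conf_set (R : realType) (K : nat) (V : 'I_K -> R) (tau : \bar R)
  : {set 'I_K} := finset (fun l => ((V l)%:E <= tau)%E).

Definition prob_perm {R : numFieldType} (M : nat) (E : pred {perm 'I_M}) : R :=
  #|E|%:R / #|{perm 'I_M}|%:R.

From HB Require Import structures.
From mathcomp Require Import all_boot all_order all_algebra all_fingroup.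
From mathcomp Require Import boolp classical_sets reals constructive_ereal ereal.
Import Order.TTheory GRing.Theory Num.Theory.
Local Open Scope ring_scope.

(* The scores are invariant under the random permutation, so V_k attaches a
   fixed score to each non-training cuboid (whatever lambda and the
   neighbourhoods are), and the true test label is covered as soon as fewer
   than q = ceil((n+1)(1-alpha)) calibration scores lie strictly below the
   test score.  Fix a permutation and exchange the test position with each of
   the n+1 calibration/test positions in turn: at least min(q, n+1) of them
   have fewer than q strictly smaller scores among those n+1, and so yield
   coverage.  As left multiplication by a transposition is a bijection of the
   permutation group, double counting gives a coverage probability of at
   least min(q, n+1)/(n+1) >= 1 - alpha. *)

Lemma card_low_rank {d : Order.disp_t} {X : orderType d} {T : finType}
    {D : {set T}} (w : T -> X) {q : nat} :
  (q <= #|D|)%N ->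
  (q <= #|[set j in D | #|[set i in D | (w i < w j)%O]| < q]|)%N.
Proof.
move=> qD; rewrite leqNgt; apply/negP => smallA.
set A := [set j in D | _] in smallA.
have [/eqP|[j0 j0DA]] := set_0Vmem (D :\: A).
  rewrite finset.setD_eq0 => /subset_leq_card DA.
  by move: (leq_trans qD DA); rewrite leqNgt smallA.
case: (arg_minP w j0DA) => j jDA jmin.
have /setDP[jD /negP] : j \in D :\: A := jDA; apply; rewrite inE jD /=.
apply: leq_ltn_trans smallA; apply/subset_leq_card/fintype.subsetP => i.
rewrite inE => /andP[iD wij]; apply/negPn/negP => iNA.
have iDA : i \in D :\: A by apply/setDP.
by move: (jmin i iDA); rewrite leNgt wij.
Qed.

Lemma conf_threshold_ge (R : realType) (n : nat) (sc : 'I_n -> R) (alpha t : R) :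
  (0 < n)%N ->
  #|[set i | sc i < t]|%:Z < Num.ceil (n.+1%:R * (1 - alpha)) ->
  (t%:E <= conf_threshold sc alpha)%E.
Proof.
move=> n_gt0 few; apply/ereal_infP => _ [x xq <-]; rewrite lee_fin leNgt.
apply/negP => xt; move: xq => /=; apply/negP; rewrite -ltNge.
rewrite ltr_pM2r ?invr_gt0 ?ltr0n //.
apply: (@le_lt_trans _ _ #|[set i | sc i < t]|%:R); last by rewrite -(ltr_int R) in few.
rewrite ler_nat; apply/subset_leq_card/fintype.subsetP => i; rewrite !inE => sci.
exact: le_lt_trans xt.
Qed.

Lemma ceil_natrM_ge0 (R : archiRealDomainType) (m : nat) (a : R) :
  0 <= a -> 0 <= Num.ceil (m%:R * a).
Proof. by move=> a_ge0; rewrite ceil_ge0 (lt_le_trans (ltrN10 R)) ?mulr_ge0. Qed.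

Lemma le_minn_ceil (R : archiRealDomainType) (m : nat) (a : R) :
  0 <= a <= 1 -> a * m%:R <= (minn `|Num.ceil (m%:R * a)|%N m)%:R.
Proof.
case/andP=> a_ge0 a_le1; have [_|_] := leqP; last by rewrite ler_piMl.
by rewrite natr_absz ger0_norm ?ceil_natrM_ge0 // mulrC ceil_ge.
Qed.

Section ExchangeCounting.

Context {d : Order.disp_t} {X : orderType d} {M n : nat}.
Variables (hnM : (n < M)%N) (v : 'I_M -> X).

Definition test_rank (s : {perm 'I_M}) : nat :=
  #|[set i : 'I_n | (v (cal hnM s i) < v (test hnM s))%O]|.

Let D := [set x : 'I_M | (x <= n)%N].

Let swap (x : 'I_M) := tperm x (Ordinal hnM).

Let card_D : #|D| = n.+1.
Proof.
have -> : D = [set widen_ord hnM x | x in 'I_n.+1].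
  apply/setP => x; rewrite inE; apply/idP/imsetP => [xn|[y _ ->]]; last by rewrite /= -ltnS.
  by exists (Ordinal (xn : (x < n.+1)%N)) => //; apply: val_inj.
by rewrite card_imset ?card_ord // => a b [] /ord_inj.
Qed.

Lemma test_rank_swap (s : {perm 'I_M}) {x : 'I_M} : x \in D ->
  (test_rank (swap x * s)%g <= #|[set j in D | (v (s j) < v (s x))%O]|)%N.
Proof.
move=> xD; rewrite /test_rank /test /cal permM tpermR.
set g := fun i : 'I_n => swap x (widen_ord (ltnW hnM) i).
have g_inj : injective g by move=> a b /perm_inj [] /ord_inj.
rewrite -(card_imset _ g_inj); apply/subset_leq_card/fintype.subsetP => y /imsetP[i].
rewrite !inE permM => lt_i ->; rewrite lt_i andbT /g.
rewrite /swap; case: tpermP => [_|_|_ _] /=; [by [] | by rewrite inE in xD | exact: ltnW].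
Qed.

Lemma card_test_rank_lt (q : nat) :
  (minn q n.+1 * #|{perm 'I_M}| <= n.+1 * #|[set s | test_rank s < q]|)%N.
Proof.
set F := [set s | _].
have card_swapF x : #|[set s | (swap x * s)%g \in F]| = #|F|.
  by rewrite -(card_preimset F (mulgI (swap x))); apply: eq_card => s; rewrite !inE.
have -> : (n.+1 * #|F| = \sum_(x in D) \sum_(s | (swap x * s)%g \in F) 1)%N.
  rewrite -card_D -sum_nat_const; apply: eq_bigr => x _.
  by rewrite sum1dep_card card_swapF.
rewrite (exchange_big_dep predT) //= mulnC -sum_nat_const; apply: leq_sum => s _.
rewrite sum1dep_card.
have qD : (minn q n.+1 <= #|D|)%N by rewrite card_D geq_minr.
apply: leq_trans (card_low_rank (fun x => v (s x)) qD) _.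
apply/subset_leq_card/fintype.subsetP => x /setIdP[xD low_x].
apply/setIdP; split=> //; rewrite inE.
apply: leq_ltn_trans (test_rank_swap s xD) _.
exact: leq_trans low_x (geq_minl _ _).
Qed.

End ExchangeCounting.

Theorem proposition2 (R : realType) (P U K M n : nat)
  (cub : 'I_M -> cuboid R P U) (lab : 'I_M -> 'I_K)
  (S : {perm 'I_M} -> cuboid R P U -> 'I_K -> R)
  (HS : forall (s p : {perm 'I_M}) B l, S (p * s)%g B l = S s B l)
  (N : 'I_M -> {set 'I_M}) (lam : R) (hlam : 0 <= lam <= 1)
  (k : nat) (n_gt0 : (0 < n)%N) (hnM : (n < M)%N)
  (alpha : R) (halpha : 0 < alpha < 1) :
  1 - alpha <=
  prob_perm (fun s : {perm 'I_M} =>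
    let V := SAO lam N (fun i l => S s (cub i) l) k in
    let tau := conf_threshold
                 (fun i : 'I_n => V (cal hnM s i) (lab (cal hnM s i))) alpha in
    lab (test hnM s) \in conf_set (V (test hnM s)) tau).
Proof.
set covered := (fun s => _).
set v := fun i => SAO lam N (fun i l => S 1%g (cub i) l) k i (lab i).
have [alpha_gt0 alpha_lt1] := andP halpha.
have level_ge0 : 0 <= 1 - alpha by rewrite subr_ge0 ltW.
pose c := Num.ceil (n.+1%:R * (1 - alpha)); pose q := `|c|%N.
have qc : q%:Z = c by rewrite gez0_abs ?ceil_natrM_ge0.
have rank_covered s : (test_rank hnM v s < q)%N -> covered s.
  move=> low; rewrite /covered /conf_set inE.
  have -> : (fun i l => S s (cub i) l) = (fun i l => S 1%g (cub i) l).
    by apply/funext => i; apply/funext => l; rewrite -(HS 1%g s) mulg1.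
  by apply: conf_threshold_ge => //; rewrite -/c -qc ltz_nat.
have perm_gt0 : (0 < #|{perm 'I_M}|)%N by apply/card_gt0P; exists 1%g.
rewrite /prob_perm ler_pdivlMr ?ltr0n // -(ler_pM2r (ltr0Sn R n)).
apply: (le_trans (y := (minn q n.+1)%:R * #|{perm 'I_M}|%:R)).
  by rewrite mulrAC ler_wpM2r // le_minn_ceil // level_ge0 gerBl ltW.
rewrite -natrM [X in _ <= X]mulrC -natrM ler_nat.
apply: leq_trans (card_test_rank_lt hnM v q) _; rewrite leq_mul2l /=.
by apply/subset_leq_card/fintype.subsetP => s; rewrite !inE => /rank_covered.
Qed.
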